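(* Let $K$ be a field of characteristic $0$, $n\ge2$, and let $f=\sum_{i_1,\dots,i_n\ge0}a_{i_1,\dots,i_n}x_1^{i_1}\cdots x_n^{i_n}\in K[[x_1,\dots,x_n]]$ (not necessarily D-finite). Define $$\sigma(f)=\frac{1}{s_1\cdots s_{n-1}}\,f\Bigl(s_1,\frac{s_2}{s_1},\frac{s_3}{s_2},\dots,\frac{s_{n-1}}{s_{n-2}},\frac{t}{s_{n-1}}\Bigr),$$ a formal series in $s_1,\dots,s_{n-1}$ (integer exponents) and $t$ (non-negative exponents). Fix any lexicographical order on monomials in $D_{s_1},\dots,D_{s_{n-1}}$. Let $P\in(K[t]\langle D_t\rangle)[D_{s_1},\dots,D_{s_{n-1}}]$ be non-zero, let $D_{s_1}^{\alpha_1}\cdots D_{s_{n-1}}^{\alpha_{n-1}}$ be the smallest monomial occurring in $P$ with non-zero coefficient, and write $P=\tilde P(t;D_t)D_{s_1}^{\alpha_1}\cdots D_{s_{n-1}}^{\alpha_{n-1}}+(\text{terms with higher monomials})$ with $\tilde P\in K[t]\langle D_t\rangle$ non-zero. If $P(\sigma(f))=0$, then $\tilde P$ annihilates the complete diagonal $\Delta(f)=\sum_{i\ge0}a_{i,\dots,i}t^i$.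
   Context: Operators act on series in $s_1,\dots,s_{n-1},t$ by multiplication by $t$ and termwise differentiation $D_t=\partial/\partial t$, $D_{s_i}=\partial/\partial s_i$; coefficients in $K[t]\langle D_t\rangle$ are written to the left of monomials in the $D_{s_i}$. *)

From HB Require Import structures.
From mathcomp Require Import all_boot all_order all_algebra all_fingroup.
From mathcomp Require Import mpoly.
Set Implicit Arguments. Unset Strict Implicit. Unset Printing Implicit Defensive.
Import Order.TTheory GRing.Theory Num.Theory.
Local Open Scope ring_scope.

(* Formal series in variables indexed by an exponent type E (exponents of
   s_1..s_{k}) and t (nat exponents), represented by their coefficient
   function: g e m = coefficient of s^e t^m. *)
Definition series (K : Type) (E : Type) := E -> nat -> K.

Section Ops.
Variable K : fieldType.
Variable E : Type.

Definition tmul (g : series K E) : series K E :=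
  fun e m => if m is m'.+1 then g e m' else 0.

Definition dt (g : series K E) : series K E :=
  fun e m => m.+1%:R * g e m.+1.

Definition polyt_act (p : {poly K}) (g : series K E) : series K E :=
  fun e m => \sum_(a < size p) p`_a * iter a tmul g e m.

(* Elements of K[t]<D_t> are represented in normal form
   w = sum_b (w`_b)(t) D_t^b  (coefficients to the left), as w : {poly {poly K}}. *)
Definition weyl_act (w : {poly {poly K}}) (g : series K E) : series K E :=
  fun e m => \sum_(b < size w) polyt_act w`_b (iter b dt g) e m.
End Ops.

Section SOps.
Variable K : fieldType.
Variable k : nat.

Definition shift (e : 'I_k -> int) (i : 'I_k) : 'I_k -> int :=
  fun j => if j == i then e j + 1 else e j.

Definition Ds (i : 'I_k) (g : series K ('I_k -> int)) : series K ('I_k -> int) :=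
  fun e m => (e i + 1)%:~R * g (shift e i) m.

Definition Dmono (al : 'X_{1..k}) (g : series K ('I_k -> int)) :
    series K ('I_k -> int) :=
  foldr (fun i h => iter (al i) (Ds i) h) g (enum 'I_k).

(* action of P in (K[t]<D_t>)[D_{s_1},...,D_{s_k}], coefficients written to
   the left of the D_s-monomials *)
Definition op_act (P : {mpoly {poly {poly K}}[k]}) (g : series K ('I_k -> int)) :
    series K ('I_k -> int) :=
  fun e m => \sum_(al <- msupp P) weyl_act (mcoeff al P) (Dmono al g) e m.

(* lexicographic order on monomials w.r.t. the variable ordering given by pi *)
Definition lexlt (pi : {perm 'I_k}) (a b : 'X_{1..k}) : bool :=
  [exists j : 'I_k, (a (pi j) < b (pi j))%N &&
     [forall l : 'I_k, (l < j)%N ==> (a (pi l) == b (pi l))]].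
End SOps.

Definition sigma (K : fieldType) (n : nat) (a : ('I_n -> nat) -> K) :
    series K ('I_n.-1 -> int) :=
  fun e m =>
    let idx := fun j : 'I_n =>
      (m%:Z + \sum_(l < n.-1 | (j <= l)%N) (e l + 1))%R in
    if [forall j, (0 <= idx j)%R] then a (fun j => `|idx j|%N) else 0.

(* complete diagonal, as a series in t (trivial s-exponent type unit) *)
Definition diag (K : fieldType) (n : nat) (a : ('I_n -> nat) -> K) :
    series K unit :=
  fun _ m => a (fun _ => m).

From HB Require Import structures.
From mathcomp Require Import all_boot all_order all_algebra all_fingroup.
From mathcomp Require Import mpoly.
From mathcomp Require Import zify.
From Stdlib Require Import FunctionalExtensionality.
Local Open Scope ring_scope.
Import GRing.Theory.

(* Extract the coefficient of s^e with e_j = -alpha_j - 1 from P(sigma f) = 0.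
   Since D_{s_j}^d multiplies the coefficient of s^(e + d) by the rising
   factorial (e_j + 1)(e_j + 2)...(e_j + d), every monomial beta of P exceeding
   alpha in some coordinate contributes zero, while D_s^alpha brings the
   coefficients of s^(-1,...,-1), which are exactly those of the diagonal, up
   to a product of signed factorials, non-zero in characteristic 0. *)

Lemma pchar0_intr_eq0 (K : fieldType) (z : int) :
  [pchar K] =i pred0 -> (z%:~R == 0 :> K) = (z == 0).
Proof.
move=> /pcharf0P K0; case: z => d; first exact: K0.
by rewrite NegzE intrN oppr_eq0 K0.
Qed.

Section SliceOperators.
Context {K : fieldType} {E1 E2 : Type}.
Context {G : series K E1} {H : series K E2} {e1 : E1} {e2 : E2} {c : K}.
Hypothesis GH : forall m, G e1 m = c * H e2 m.

Lemma iter_tmul_scale a m :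
  iter a (@tmul K _) G e1 m = c * iter a (@tmul K _) H e2 m.
Proof.
elim: a m => [|a IH] [|m] //=; rewrite /tmul ?mulr0 //; exact: IH.
Qed.

Lemma iter_dt_scale b m :
  iter b (@dt K _) G e1 m = c * iter b (@dt K _) H e2 m.
Proof. by elim: b m => [|b IH] m //=; rewrite /dt IH mulrCA. Qed.

End SliceOperators.

Lemma weyl_act_scale {K : fieldType} {E1 E2 : Type} (w : {poly {poly K}})
    {G : series K E1} {H : series K E2} {e1 : E1} {e2 : E2} {c : K} :
  (forall m, G e1 m = c * H e2 m) ->
  forall m, weyl_act w G e1 m = c * weyl_act w H e2 m.
Proof.
move=> GH m; rewrite /weyl_act mulr_sumr; apply: eq_bigr => b _.
rewrite /polyt_act mulr_sumr; apply: eq_bigr => i _.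
by rewrite (iter_tmul_scale (iter_dt_scale GH b)) mulrCA.
Qed.

Definition rfact (x : int) (d : nat) : int := \prod_(l < d) (x + l%:Z).

Lemma rfact_eq0 x d : (rfact x d == 0) = (- d%:Z < x <= 0).
Proof.
apply/idP/idP => [/prodf_eq0 [l _ /eqP xl0] | /andP [dx x0]].
  have := ltn_ord l; lia.
apply/prodf_eq0; have ld : (`|x| < d)%N by lia.
by exists (Ordinal ld) => //=; apply/eqP; lia.
Qed.

Section DsAction.
Context {K : fieldType} {k : nat}.

Definition shiftn (e : 'I_k -> int) (i : 'I_k) (d : nat) : 'I_k -> int :=
  fun j => if j == i then e j + d%:Z else e j.

Lemma iter_Ds i d (g : series K ('I_k -> int)) e m :
  iter d (@Ds K k i) g e m = (rfact (e i + 1) d)%:~R * g (shiftn e i d) m.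
Proof.
elim: d e => [|d IH] e /=.
  rewrite /rfact big_ord0 mul1r; congr g; apply: functional_extensionality => j.
  by rewrite /shiftn; case: eqP => // ->; rewrite addr0.
rewrite /Ds IH /rfact big_ord_recl intrM mulrA addr0; congr (_ * _%:~R * _).
- by apply: eq_bigr => l _; rewrite /shift eqxx lift0; lia.
- congr g; apply: functional_extensionality => j; rewrite /shiftn /shift.
  by case: eqP => [->|]; rewrite ?eqxx //; lia.
Qed.

Lemma foldr_Ds (be : 'X_{1..k}) (g : series K ('I_k -> int)) (s : seq 'I_k) e m :
  uniq s ->
  foldr (fun i h => iter (be i) (@Ds K k i) h) g s e m =
  (\prod_(i <- s) rfact (e i + 1) (be i))%:~R *
    g (fun j => if j \in s then e j + (be j)%:Z else e j) m.
Proof.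
elim: s e => [|i s IH] e /=; first by rewrite big_nil mul1r.
case/andP=> nis us; rewrite iter_Ds IH // big_cons intrM mulrA.
congr (_ * _%:~R * _).
  apply: eq_big_seq => j js; have ji : j != i by apply: contraNneq nis => <-.
  by rewrite /shiftn (negbTE ji).
congr g; apply: functional_extensionality => j; rewrite /shiftn in_cons.
by case: (eqVneq j i) => [->|] //=; rewrite (negbTE nis).
Qed.

Lemma Dmono_coef (be : 'X_{1..k}) (g : series K ('I_k -> int)) e m :
  Dmono be g e m =
  (\prod_i rfact (e i + 1) (be i))%:~R * g (fun j => e j + (be j)%:Z) m.
Proof.
rewrite /Dmono foldr_Ds ?enum_uniq // big_enum; congr (_ * g _ m).
by apply: functional_extensionality => j; rewrite mem_enum.
Qed.

Lemma op_act_supp1 {P : {mpoly {poly {poly K}}[k]}} {al : 'X_{1..k}}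
    {g : series K ('I_k -> int)} {e : 'I_k -> int} :
  al \in msupp P ->
  (forall be, be \in msupp P -> be != al -> forall m, Dmono be g e m = 0) ->
  forall m, op_act P g e m = weyl_act (mcoeff al P) (Dmono al g) e m.
Proof.
move=> alP vanish m; rewrite /op_act (bigD1_seq al) ?msupp_uniq //= big1_seq.
  by rewrite addr0.
move=> be /andP [beal beP].
rewrite (weyl_act_scale _ (H := Dmono be g) (e2 := e) (c := 0)) ?mul0r // => m'.
by rewrite mul0r vanish.
Qed.

End DsAction.

Lemma sigma_minus1_diag (K : fieldType) (n : nat) (a : ('I_n -> nat) -> K)
    (e : 'I_n.-1 -> int) u m :
  (forall j, e j = -1) -> sigma a e m = diag a u m.
Proof.
move=> e1; have idx j : m%:Z + \sum_(l < n.-1 | (j <= l)%N) (e l + 1) = m%:Z.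
  by rewrite big1 ?addr0 // => l _; rewrite e1 addNr.
rewrite /sigma /diag; case: ifP => [_|/forallP[] j]; last by rewrite idx.
by congr a; apply: functional_extensionality => j; rewrite idx.
Qed.

Theorem lemma4p14 (K : fieldType) (n : nat) (a : ('I_n -> nat) -> K)
    (pi : {perm 'I_n.-1}) (P : {mpoly {poly {poly K}}[n.-1]})
    (al : 'X_{1..n.-1}) :
  [pchar K] =i pred0 ->
  (2 <= n)%N ->
  P != 0 ->
  al \in msupp P ->
  (forall be, be \in msupp P -> be != al -> lexlt pi al be) ->
  (forall e m, op_act P (sigma a) e m = 0) ->
  forall u m, weyl_act (mcoeff al P) (diag a) u m = 0.
Proof.
move=> K0 _ _ alP lex Pz u m.
pose e0 j := - (al j)%:Z - 1.
pose C : K := (\prod_i rfact (e0 i + 1) (al i))%:~R.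
have vanish be : be \in msupp P -> be != al -> forall m', Dmono be (sigma a) e0 m' = 0.
  move=> beP beal m'; have /existsP [j /andP [lt_al_be _]] := lex be beP beal.
  rewrite Dmono_coef (bigD1 (pi j)) //= intrM.
  suff /eqP -> : rfact (e0 (pi j) + 1) (be (pi j)) == 0 by rewrite !mul0r.
  by rewrite rfact_eq0 /e0; lia.
have lead m' : Dmono al (sigma a) e0 m' = C * diag a u m'.
  by rewrite Dmono_coef (@sigma_minus1_diag _ _ a _ u) // => j; rewrite /e0; lia.
have CN : C != 0.
  rewrite pchar0_intr_eq0 // prodf_seq_neq0; apply/allP => i _ /=.
  by rewrite rfact_eq0 /e0; lia.
have := Pz e0 m; rewrite (op_act_supp1 alP vanish) (weyl_act_scale _ lead).
by move/eqP; rewrite mulf_eq0 (negbTE CN) => /eqP.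
Qed.
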